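(* Let $A\in M_n$. Suppose that for every $c\in\mathbb{R}^n$ the $c$-numerical range $W_c(A)$ is a closed circular disc centered at $0$ (possibly of radius $0$). Then $A$ is nilpotent.
   Context: $M_n$ denotes the space of $n\times n$ complex matrices. For $c=(c_1,\dots,c_n)^t\in\mathbb{R}^n$, the $c$-numerical range of $A\in M_n$ is $W_c(A)=\{\sum_{j=1}^n c_jx_j^*Ax_j:\ x_1,\dots,x_n\in\mathbb{C}^n\text{ orthonormal}\}$. *)

(* Complex matrices are taken over an arbitrary
   numClosedFieldType C (an algebraically closed field with conjugation,
   order and norm; the complex numbers are the model of interest). *)
From HB Require Import structures.
From mathcomp Require Import all_boot all_order all_algebra.
Set Implicit Arguments. Unset Strict Implicit. Unset Printing Implicit Defensive.
Import Order.TTheory GRing.Theory Num.Theory.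
Local Open Scope ring_scope.

Definition adjv (C : numClosedFieldType) (n : nat) (x : 'cV[C]_n) : 'rV[C]_n :=
  (map_mx Num.conj x)^T.

Definition orthonormal_family (C : numClosedFieldType) (n : nat)
  (x : 'I_n -> 'cV[C]_n) : Prop :=
  forall i j : 'I_n, (adjv (x i) *m x j) 0 0 = (i == j)%:R.

Definition real_vec (C : numClosedFieldType) (n : nat) (c : 'I_n -> C) : Prop :=
  forall j, c j \is Num.real.

Definition c_numrange (C : numClosedFieldType) (n : nat) (c : 'I_n -> C)
  (A : 'M[C]_n) (z : C) : Prop :=
  exists x : 'I_n -> 'cV[C]_n, orthonormal_family x /\
    z = \sum_(j < n) c j * (adjv (x j) *m A *m x j) 0 0.

Definition is_closed_disc0 (C : numClosedFieldType) (S : C -> Prop) : Prop :=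
  exists r : C, 0 <= r /\ forall z : C, S z <-> `|z| <= r.

Definition mx_nilpotent (C : numClosedFieldType) (n : nat) (A : 'M[C]_n) : Prop :=
  exists k : nat, A ^+ k = 0.

(* For [|w| = 1] let [H_w] be the Hermitian part of [w^* A].  For [c] the
   indicator of the first [k] coordinates, the radius [r_k] of the disc
   [W_c(A)] is the maximum of [Re (w^* z)] over [z] in [W_c(A)], which by Ky
   Fan's maximum principle is the sum of the [k] largest eigenvalues of [H_w].
   Hence the spectrum of [H_w], and with it [\tr (H_w ^+ m)], does not depend
   on [w].  Since [A + w^2 A^* = 2 w H_w], the polynomial
   [\tr ((A + X^2 A^* ) ^+ m) - (2 X)^m \tr (H_1 ^+ m)] vanishes on the unit
   circle, hence everywhere; at [X = 0] this gives [\tr (A ^+ m) = 0] for all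
   [m > 0], and a matrix all of whose powers are traceless is nilpotent. *)
From HB Require Import structures.
From mathcomp Require Import all_boot all_order all_algebra.
From mathcomp Require Import ring.
Set Implicit Arguments. Unset Strict Implicit. Unset Printing Implicit Defensive.
Import Order.TTheory GRing.Theory Num.Theory.
Local Open Scope ring_scope.

Lemma power_sums_eq0 (R : numDomainType) (I : finType) (lam : I -> R) :
  (forall m, (0 < m)%N -> \sum_i lam i ^+ m = 0) -> forall i, lam i = 0.
Proof.
move=> sum_pow0 i0; apply/eqP/negPn/negP => lam_i0_neq0.
set l := lam i0.
(* [f] has no constant term, so [\sum_i f.[lam i]] is a combination of power sums. *)
pose f : {poly R} := 'X * \prod_(i | lam i != l) ('X - (lam i)%:P).
have sum_f0 : \sum_i f.[lam i] = 0.
  under eq_bigr => i _ do rewrite horner_coef.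
  rewrite exchange_big /=; case: (size f) => [|s]; first by rewrite big_ord0.
  rewrite big_ord_recl /= big1 ?add0r => [|i _]; last by rewrite coefXM mul0r.
  by apply: big1 => k _; rewrite -mulr_sumr sum_pow0 ?mulr0.
have sum_fE : \sum_i f.[lam i] = f.[l] *+ #|[pred i | lam i == l]|.
  rewrite (bigID (fun i => lam i == l)) /= [X in _ + X]big1 ?addr0.
    by rewrite -sumr_const; apply: eq_bigr => i /eqP ->.
  move=> i ni; rewrite hornerM horner_prod (bigD1 i) //= !hornerE subrr /=.
  by rewrite mulr0 mul0r.
have fl_neq0 : f.[l] != 0.
  rewrite hornerM horner_prod hornerX mulf_neq0 // prodf_seq_neq0.
  by apply/allP => i _; apply/implyP => li; rewrite !hornerE subr_eq0 eq_sym.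
have /card0_eq/(_ i0) : #|[pred i | lam i == l]| = 0%N.
  apply/eqP; move: sum_f0; rewrite sum_fE => /eqP.
  by rewrite mulrn_eq0 (negPf fl_neq0) orbF.
by rewrite inE eqxx.
Qed.

Lemma trig_mxM (R : comNzRingType) n (S T : 'M[R]_n) :
  is_trig_mx S -> is_trig_mx T ->
  is_trig_mx (S *m T) /\ forall i, (S *m T) i i = S i i * T i i.
Proof.
move=> /is_trig_mxP S_trig /is_trig_mxP T_trig; split.
  apply/is_trig_mxP => i j lt_ij; rewrite mxE big1 // => k _.
  case: (ltnP i k) => ik; first by rewrite S_trig // mul0r.
  by rewrite T_trig ?mulr0 // (leq_ltn_trans ik lt_ij).
move=> i; rewrite mxE (bigD1 i) //= big1 ?addr0 // => k k_neq_i.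
case: (ltngtP i k) => [ik|ki|/val_inj ik]; first by rewrite S_trig // mul0r.
  by rewrite T_trig ?mulr0.
by rewrite ik eqxx in k_neq_i.
Qed.

Lemma trig_mxX (R : comNzRingType) n (T : 'M[R]_n) m : is_trig_mx T ->
  is_trig_mx (T ^+ m) /\ forall i, (T ^+ m) i i = T i i ^+ m.
Proof.
move=> T_trig; elim: m => [|m [trig_Tm Tm_diag]].
  by rewrite expr0; split=> [|i]; rewrite ?scalar_mx_is_trig // mxE eqxx.
rewrite exprS -mulmxE; have [-> TTm_diag] := trig_mxM T_trig trig_Tm.
by split=> // i; rewrite TTm_diag Tm_diag exprS.
Qed.

Lemma conjmxX (F : fieldType) n (P M : 'M[F]_n.+1) m : P \in unitmx ->
  conjmx P (M ^+ m) = conjmx P M ^+ m.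
Proof.
have powE (N : 'M[F]_n.+1) : N ^+ m = horner_mx N 'X^m.
  by rewrite rmorphXn /= horner_mx_X.
by move=> P_unit; rewrite !powE horner_mx_conj ?row_free_unit ?stablemx_unit.
Qed.

Lemma mxtrace_conjmx (F : fieldType) n (P M : 'M[F]_n) : P \in unitmx ->
  \tr (conjmx P M) = \tr M.
Proof. by move=> P_unit; rewrite conjumx // mxtrace_mulC mulmxA mulVmx ?mul1mx. Qed.

Lemma nilpotent_of_trace_pow (C : numClosedFieldType) n (A : 'M[C]_n.+1) :
  (forall m, (0 < m)%N -> \tr (A ^+ m) = 0) -> A ^+ n.+1 = 0.
Proof.
move=> tr_pow0; have [P P_unitary] := Schur A (ltn0Sn n).
have P_unit : P \in unitmx by apply: unitarymx_unit.
rewrite /similar_to /= => T_trig; set T := conjmx P A in T_trig.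
have T_diag0 i : T i i = 0.
  apply: (power_sums_eq0 (lam := fun i => T i i)) => m m_gt0.
  have [_ Tm_diag] := trig_mxX m T_trig.
  rewrite -[RHS](tr_pow0 m m_gt0) -(mxtrace_conjmx _ P_unit) conjmxX //.
  by apply: eq_bigr => j _; rewrite Tm_diag.
have := Cayley_Hamilton T; rewrite char_poly_trig // (eq_bigr (fun _ => 'X)).
  rewrite prodr_const card_ord rmorphXn /= horner_mx_X -conjmxX // => TX0.
  by rewrite -(conjmxK (A ^+ n.+1) P_unit) TX0 conjmx0.
by move=> i _; rewrite T_diag0 subr0.
Qed.

Section UnitCircle.
Variable C : numClosedFieldType.

(* Cayley transform of the naturals: infinitely many points of modulus 1. *)
Definition cayley_pt (k : nat) : C := (k%:R + 'i) / (k%:R - 'i).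

Lemma cayley_pt_den_conj k : (k%:R - 'i : C) = (k%:R + 'i)^*.
Proof. by rewrite rmorphD /= conjCi rmorph_nat. Qed.

Lemma cayley_pt_num_neq0 k : (k%:R + 'i : C) != 0.
Proof.
have : 'Im (k%:R + 'i : C) = 1 by rewrite raddfD /= Im_i (Creal_ImP _ (@realn C k)) add0r.
by apply: contra_eq_neq => ->; rewrite raddf0 eq_sym oner_neq0.
Qed.

Lemma cayley_pt_den_neq0 k : (k%:R - 'i : C) != 0.
Proof. by rewrite cayley_pt_den_conj conjC_eq0 cayley_pt_num_neq0. Qed.

Lemma norm_cayley_pt k : `|cayley_pt k| = 1.
Proof.
by rewrite normf_div cayley_pt_den_conj norm_conjC divff // normr_eq0 cayley_pt_num_neq0.
Qed.

Lemma cayley_pt_inj : injective cayley_pt.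
Proof.
move=> a b /eqP; rewrite /cayley_pt eqr_div ?cayley_pt_den_neq0 // => /eqP eq_ab.
have : (2 * 'i * (b%:R - a%:R) : C) = 0.
  by rewrite -[RHS](subrr ((a%:R + 'i) * (b%:R - 'i))) {2}eq_ab; ring.
move/eqP; rewrite !mulf_eq0 pnatr_eq0 (negPf (neq0Ci C)) subr_eq0 eqr_nat.
by move/eqP.
Qed.

Lemma poly_eq0_on_unit_circle (p : {poly C}) :
  (forall w, `|w| = 1 -> root p w) -> p = 0.
Proof.
move=> p_root; apply/eqP/negP => /negP p_neq0.
pose rs := map cayley_pt (iota 0 (size p)).
have rs_roots : all (root p) rs.
  by apply/allP => _ /mapP[k _ ->]; apply/p_root/norm_cayley_pt.
have rs_uniq : uniq rs by rewrite map_inj_uniq ?iota_uniq //; apply: cayley_pt_inj.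
by have := max_poly_roots p_neq0 rs_roots rs_uniq; rewrite size_map size_iota ltnn.
Qed.

(* The polynomial [\tr ((A + X^2 B)^m) - K (2 X)^m] vanishes on the unit
   circle; its constant coefficient is [\tr (A ^+ m)]. *)
Lemma trace_pow_eq0_of_unit_circle n (A B : 'M[C]_n) m (K : C) : (0 < m)%N ->
  (forall w, `|w| = 1 -> \tr ((A + w ^+ 2 *: B) ^+ m) = (2 * w) ^+ m * K) ->
  \tr (A ^+ m) = 0.
Proof.
move=> m_gt0 trK.
pose M : 'M[{poly C}]_n := map_mx polyC A + 'X^2 *: map_mx polyC B.
have M_eval w : map_mx (horner_eval w) M = A + w ^+ 2 *: B.
  apply/matrixP => i j; rewrite !mxE /= horner_evalE.
  by rewrite hornerD hornerM hornerXn !hornerC.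
pose Q := \tr (M ^+ m) - (2 ^+ m * K) *: 'X^m.
have Q_eval w : Q.[w] = \tr ((A + w ^+ 2 *: B) ^+ m) - (2 * w) ^+ m * K.
  rewrite hornerD hornerN -(M_eval w) -[map_mx _ M ^+ m]rmorphXn trace_map_mx.
  by rewrite hornerZ hornerXn exprMn mulrAC.
have Q0 : Q = 0.
  by apply: poly_eq0_on_unit_circle => w w1; rewrite /root Q_eval trK ?subrr.
have := Q_eval 0; rewrite Q0 horner0 expr0n /= scale0r addr0 mulr0 expr0n.
by rewrite gtn_eqF // mul0r subr0.
Qed.

End UnitCircle.

Definition ind_lt (R : nzSemiRingType) n (k : nat) (j : 'I_n) : R := (j < k)%:R.
Arguments ind_lt {R n} k j.

Lemma ind_lt_diff (R : nzRingType) n (e : 'I_n -> R) (j : 'I_n) :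
  e j = \sum_i ind_lt j.+1 i * e i - \sum_i ind_lt j i * e i.
Proof.
rewrite -sumrB (bigD1 j) //= big1 ?addr0 => [|i /negPf neq_ij].
  by rewrite /ind_lt ltnSn ltnn -mulrBl subr0 mul1r.
by rewrite /ind_lt ltnS leq_eqVlt (inj_eq val_inj) neq_ij -mulrBl subrr mul0r.
Qed.

Section Rearrangement.
Variables (R : numDomainType) (n : nat).

Lemma exists_nonincreasing_perm (d : 'I_n.+1 -> R) : (forall i, d i \is Num.real) ->
  exists2 s : 'I_n.+1 -> 'I_n.+1, injective s &
    forall i j : 'I_n.+1, (i <= j)%N -> d (s j) <= d (s i).
Proof.
move=> d_real; pose r i j := d j <= d i.
have r_trans : transitive r by move=> a b c ba cb; apply: le_trans cb ba.
have r_total : total r by move=> a b; apply: real_leVge.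
pose l := sort r (enum 'I_n.+1).
have l_size : size l = n.+1 by rewrite size_sort size_enum_ord.
have l_uniq : uniq l by rewrite sort_uniq enum_uniq.
exists (fun j => nth ord0 l j).
  by move=> a b /eqP; rewrite nth_uniq ?l_size // => /eqP/val_inj.
move=> i j; rewrite leq_eqVlt => /orP[/eqP/val_inj -> // | lt_ij].
by apply: (sorted_ltn_nth r_trans ord0 (sort_sorted r_total _)); rewrite ?inE ?l_size.
Qed.

Variables (d : 'I_n.+1 -> R) (s : 'I_n.+1 -> 'I_n.+1).
Hypothesis s_inj : injective s.
Hypothesis d_s_nonincr : forall i j : 'I_n.+1, (i <= j)%N -> d (s j) <= d (s i).

Lemma weighted_sum_le_top_sum (q : 'I_n.+1 -> R) k : (k <= n.+1)%N ->
  (forall i, 0 <= q i <= 1) -> \sum_i q i = \sum_(j < n.+1) ind_lt k j ->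
  \sum_i d i * q i <= \sum_j ind_lt k j * d (s j).
Proof.
move=> le_kn q01 q_mass.
(* Against the [k]-th largest value [t], each term
   [(ind_lt k j - q (s j)) * (d (s j) - t)] is nonnegative. *)
pose t := d (s (inord k.-1)).
have t_le (j : 'I_n.+1) : (j < k)%N -> t <= d (s j).
  move=> lt_jk; have k_gt0 : (0 < k)%N by apply: leq_ltn_trans lt_jk.
  apply: d_s_nonincr; rewrite inordK; first by rewrite -ltnS prednK.
  by rewrite (leq_trans _ le_kn) // ltn_predL.
have le_t (j : 'I_n.+1) : (k <= j)%N -> d (s j) <= t.
  move=> le_kj; apply: d_s_nonincr.
  case: k le_kn le_kj {t t_le q_mass} => [|k] le_kn le_kj.
    by rewrite (_ : inord 0 = ord0) //; apply: val_inj; rewrite /= inordK.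
  by rewrite /= inordK // ltnW.
rewrite (reindex_inj s_inj) /= -subr_ge0 -sumrB.
have q_s_mass : \sum_j q (s j) = \sum_(j < n.+1) ind_lt k j.
  by rewrite -q_mass [RHS](reindex_inj s_inj).
have -> : \sum_j (ind_lt k j * d (s j) - d (s j) * q (s j)) =
    \sum_j ((ind_lt k j - q (s j)) * (d (s j) - t) + t * (ind_lt k j - q (s j))).
  by apply: eq_bigr => j _; ring.
rewrite big_split /= -mulr_sumr sumrB q_s_mass subrr mulr0 addr0.
apply: sumr_ge0 => j _; have /andP[q_ge0 q_le1] := q01 (s j); rewrite /ind_lt.
case: (ltnP j k) => [lt_jk | le_kj] /=.
  by rewrite mulr_ge0 ?subr_ge0 ?t_le.
by rewrite sub0r mulNr -mulrN opprB mulr_ge0 ?subr_ge0 ?le_t.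
Qed.

End Rearrangement.

Local Open Scope sesquilinear_scope.

Definition qform (C : numClosedFieldType) n (M : 'M[C]_n) (x : 'cV[C]_n) : C :=
  (adjv x *m M *m x) 0 0.

Section Unitary.
Variable C : numClosedFieldType.

Lemma adjvK n (x : 'cV[C]_n) : (adjv x) ^t* = x.
Proof. by rewrite /adjv trmxK map_mxCK. Qed.

Lemma adjv_mul m n (M : 'M[C]_(m, n)) x : adjv (M *m x) = adjv x *m M ^t*.
Proof. by rewrite /adjv map_mxM trmx_mul -map_trmx. Qed.

Lemma qform_adj n (M : 'M[C]_n) x : qform (M ^t*) x = (qform M x)^*.
Proof.
rewrite /qform -{2}(adjvK x) -{4}(adjvK x).
have -> : adjv x *m M ^t* *m (adjv x) ^t* = (adjv x *m M *m (adjv x) ^t*) ^t*.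
  by rewrite !trmx_mul !map_mxM trmxCK mulmxA.
by rewrite !mxE.
Qed.

Lemma qform_unitary_diag n (U : 'M[C]_n) (d : 'rV[C]_n) x :
  qform (U ^t* *m diag_mx d *m U) x = \sum_i d 0 i * `|(U *m x) i 0| ^+ 2.
Proof.
rewrite /qform !mulmxA -adjv_mul -[_ *m U *m x]mulmxA mxE; apply: eq_bigr => i _.
by rewrite mul_mx_diag !mxE normCK; ring.
Qed.

Lemma unitarymx_sum_row_norm m n (U : 'M[C]_(m, n)) i : U \is unitarymx ->
  \sum_j `|U i j| ^+ 2 = 1.
Proof.
move=> /unitarymxP /(congr1 (fun M : 'M[C]_m => M i i)); rewrite !mxE eqxx mulr1n => <-.
by apply: eq_bigr => j _; rewrite normCK !mxE.
Qed.

Lemma unitarymx_sum_col_norm n (U : 'M[C]_n) j : U \is unitarymx ->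
  \sum_i `|U i j| ^+ 2 = 1.
Proof.
rewrite -trmxC_unitary => /(unitarymx_sum_row_norm j) <-.
by apply: eq_bigr => i _; rewrite !mxE norm_conjC.
Qed.

Lemma orthonormal_family_unitarymx n (x : 'I_n -> 'cV[C]_n) :
  orthonormal_family x -> \matrix_(i, j) x j i 0 \is unitarymx.
Proof.
move=> x_ortho; rewrite -trmxC_unitary; apply/unitarymxP; rewrite trmxCK.
apply/matrixP => a b; rewrite [RHS]mxE -x_ortho !mxE.
by apply: eq_bigr => i _; rewrite !mxE.
Qed.

Lemma unitarymx_rows_orthonormal n (P : 'M[C]_n) (s : 'I_n -> 'I_n) :
  P \is unitarymx -> injective s -> orthonormal_family (fun j => (row (s j) P) ^t*).
Proof.
move=> /row_unitarymxP P_rows s_inj a b.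
by rewrite /adjv map_mxCK trmxK -dotmxE P_rows (inj_eq s_inj).
Qed.

End Unitary.

Section KyFan.
Variables (C : numClosedFieldType) (n : nat).
Variables (P : 'M[C]_n.+1) (d : 'rV[C]_n.+1) (s : 'I_n.+1 -> 'I_n.+1).
Hypothesis P_unitary : P \is unitarymx.
Hypothesis s_inj : injective s.
Hypothesis d_s_nonincr : forall i j : 'I_n.+1, (i <= j)%N -> d 0 (s j) <= d 0 (s i).

Let H := P ^t* *m diag_mx d *m P.

Lemma sum_qform_le_top_sum (x : 'I_n.+1 -> 'cV[C]_n.+1) k :
  orthonormal_family x -> (k <= n.+1)%N ->
  \sum_j ind_lt k j * qform H (x j) <= \sum_j ind_lt k j * d 0 (s j).
Proof.
move=> x_ortho le_kn; pose Y := P *m \matrix_(i, j) x j i 0.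
have Y_unitary : Y \is unitarymx.
  by rewrite mul_unitarymx ?orthonormal_family_unitarymx.
have Y_col i j : (P *m x j) i 0 = Y i j.
  by rewrite !mxE; apply: eq_bigr => l _; rewrite mxE.
(* the weights [`|Y i j| ^+ 2] form a doubly stochastic matrix *)
pose q i := \sum_j ind_lt k j * `|Y i j| ^+ 2.
have -> : \sum_j ind_lt k j * qform H (x j) = \sum_i d 0 i * q i.
  under eq_bigr => j _ do rewrite qform_unitary_diag mulr_sumr.
  rewrite exchange_big /=; apply: eq_bigr => i _; rewrite mulr_sumr.
  by apply: eq_bigr => j _; rewrite Y_col; ring.
apply: (weighted_sum_le_top_sum (d := fun i => d 0 i)) => // [i|].
  rewrite /q; apply/andP; split.
    by apply: sumr_ge0 => j _; rewrite mulr_ge0 ?ler0n ?exprn_ge0.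
  rewrite -(unitarymx_sum_row_norm i Y_unitary) ler_sum // => j _.
  by rewrite /ind_lt; case: (j < k)%N; rewrite ?mul1r ?mul0r ?exprn_ge0.
rewrite exchange_big /=; apply: eq_bigr => j _.
by rewrite -mulr_sumr unitarymx_sum_col_norm ?mulr1.
Qed.

Lemma qform_row_spectral j : qform H ((row (s j) P) ^t*) = d 0 (s j).
Proof.
have P_entry i : (P *m (row (s j) P) ^t*) i 0 = (i == s j)%:R.
  transitivity ((row i P *m (row (s j) P) ^t*) 0 0); first by rewrite -row_mul !mxE.
  by rewrite -dotmxE; move/row_unitarymxP: P_unitary; apply.
rewrite qform_unitary_diag (bigD1 (s j)) //= big1 ?addr0 => [|i /negPf neq_is].
  by rewrite P_entry eqxx normr1 expr1n mulr1.
by rewrite P_entry neq_is normr0 expr0n mulr0.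
Qed.

Lemma trace_pow_unitary_diag m : \tr (H ^+ m) = \sum_i d 0 i ^+ m.
Proof.
have Pt_unitary : P ^t* \is unitarymx by rewrite trmxC_unitary.
rewrite /H -{2}[P]trmxCK -conjymx // -conjmxX ?mxtrace_conjmx ?unitarymx_unit //.
have -> : diag_mx d ^+ m = horner_mx (diag_mx d) 'X^m by rewrite rmorphXn /= horner_mx_X.
rewrite horner_mx_diag mxtrace_diag.
by apply: eq_bigr => i _; rewrite mxE hornerXn.
Qed.

End KyFan.

Definition herm_part (C : numClosedFieldType) n (M : 'M[C]_n) : 'M[C]_n :=
  2^-1 *: (M + M ^t*).

Section HermitianPart.
Variable C : numClosedFieldType.

Lemma herm_part_hermitian n (M : 'M[C]_n) : herm_part M \is hermsymmx.
Proof.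
rewrite is_hermitianmxE expr0 scale1r; apply/eqP/matrixP => i j.
by rewrite !mxE /= !rmorphM rmorphD /= conjCK fmorphV /= rmorph_nat addrC.
Qed.

Lemma qformZ n a (M : 'M[C]_n) x : qform (a *: M) x = a * qform M x.
Proof. by rewrite /qform -scalemxAr -scalemxAl mxE. Qed.

Lemma qform_herm_part n (M : 'M[C]_n) x : qform (herm_part M) x = 'Re (qform M x).
Proof.
rewrite /herm_part qformZ /qform mulmxDr mulmxDl mxE -!/(qform _ _) qform_adj.
by rewrite ReE mulrC.
Qed.

Lemma hermitian_spectral n (M : 'M[C]_n) : M \is hermsymmx ->
  M = (spectralmx M) ^t* *m diag_mx (spectral_diag M) *m spectralmx M.
Proof.
move=> M_herm; rewrite -invmx_unitary ?spectral_unitarymx //.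
exact/orthomx_spectralP/hermitian_normalmx.
Qed.

Lemma herm_part_unit_circle n (M : 'M[C]_n) w : `|w| = 1 ->
  M + w ^+ 2 *: M ^t* = (2 * w) *: herm_part (w^* *: M).
Proof.
move=> w1; have ww : w * w^* = 1 by rewrite -normCK w1 expr1n.
apply/matrixP => i j; rewrite !mxE /= rmorphM /= conjCK -{1}[M i j]mul1r -ww.
have w_neq0 : w != 0 by rewrite -normr_eq0 w1 oner_eq0.
by field; rewrite /= conjC_eq0 w_neq0.
Qed.

End HermitianPart.

Lemma exists_sorted_spectral (C : numClosedFieldType) n (H : 'M[C]_n.+1) :
  H \is hermsymmx ->
  exists P, exists d : 'rV[C]_n.+1, exists s : 'I_n.+1 -> 'I_n.+1,
    [/\ P \is unitarymx, H = P ^t* *m diag_mx d *m P, injective s &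
         forall i j : 'I_n.+1, (i <= j)%N -> d 0 (s j) <= d 0 (s i)].
Proof.
move=> H_herm; have d_real i : spectral_diag H 0 i \is Num.real.
  by move/mxOverP: (hermitian_spectral_diag_real H_herm); apply.
have [s s_inj d_s_nonincr] := exists_nonincreasing_perm d_real.
exists (spectralmx H), (spectral_diag H), s.
by split; [apply: spectral_unitarymx | apply: hermitian_spectral | |].
Qed.

Section DiscRanges.
Variables (C : numClosedFieldType) (n : nat) (A : 'M[C]_n.+1).
Hypothesis disc_ranges :
  forall c : 'I_n.+1 -> C, real_vec c -> is_closed_disc0 (c_numrange c A).

Section Rotation.
Variables (w : C) (P : 'M[C]_n.+1) (d : 'rV[C]_n.+1) (s : 'I_n.+1 -> 'I_n.+1).
Hypothesis w1 : `|w| = 1.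
Hypothesis P_unitary : P \is unitarymx.
Hypothesis herm_part_spec : herm_part (w^* *: A) = P ^t* *m diag_mx d *m P.
Hypothesis s_inj : injective s.
Hypothesis d_s_nonincr : forall i j : 'I_n.+1, (i <= j)%N -> d 0 (s j) <= d 0 (s i).

Lemma Re_rotate_sum k (F : 'I_n.+1 -> C) :
  'Re (w^* * \sum_j ind_lt k j * F j) = \sum_j ind_lt k j * 'Re (w^* * F j).
Proof.
rewrite mulr_sumr raddf_sum; apply: eq_bigr => j _.
by rewrite mulrCA [LHS]ReMl // realn.
Qed.

Lemma top_sum_eq_radius k r : (k <= n.+1)%N -> 0 <= r ->
  (forall z, c_numrange (ind_lt k) A z <-> `|z| <= r) ->
  \sum_j ind_lt k j * d 0 (s j) = r.
Proof.
move=> le_kn r_ge0 range_disc.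
have qform_rot x : 'Re (w^* * qform A x) = qform (P ^t* *m diag_mx d *m P) x.
  by rewrite -herm_part_spec qform_herm_part qformZ.
apply/eqP; rewrite eq_le; apply/andP; split.
  set z := \sum_j ind_lt k j * qform A ((row (s j) P) ^t*).
  have z_in : c_numrange (ind_lt k) A z.
    exists (fun j => (row (s j) P) ^t*); split => //.
    exact: unitarymx_rows_orthonormal.
  apply: le_trans ((range_disc z).1 z_in).
  have -> : \sum_j ind_lt k j * d 0 (s j) = 'Re (w^* * z).
    by rewrite Re_rotate_sum; apply: eq_bigr => j _; rewrite qform_rot qform_row_spectral.
  by rewrite (le_trans (leif_Re_Creal _).1) // normrM norm_conjC w1 mul1r.
have [x [x_ortho wr_eq]] : c_numrange (ind_lt k) A (w * r).
  by apply/range_disc; rewrite normrM w1 mul1r ger0_norm.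
have -> : r = 'Re (w^* * (w * r)).
  rewrite mulrA (mulrC w^*) -normCK w1 expr1n mul1r.
  by apply/esym/Creal_ReP; apply: ger0_real.
rewrite wr_eq Re_rotate_sum.
under eq_bigr => j _ do rewrite qform_rot.
exact: sum_qform_le_top_sum.
Qed.

Lemma trace_pow_herm_part_sorted m :
  \tr (herm_part (w^* *: A) ^+ m) = \sum_j d 0 (s j) ^+ m.
Proof.
by rewrite herm_part_spec trace_pow_unitary_diag // (reindex_inj s_inj).
Qed.

End Rotation.

Lemma trace_pow_herm_part_indep w w' m : `|w| = 1 -> `|w'| = 1 ->
  \tr (herm_part (w^* *: A) ^+ m) = \tr (herm_part (w'^* *: A) ^+ m).
Proof.
move=> w1 w'1.
have [P [d [s [P_unitary H_spec s_inj d_s_nonincr]]]] :=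
  exists_sorted_spectral (herm_part_hermitian (w^* *: A)).
have [P' [d' [s' [P'_unitary H'_spec s'_inj d'_s'_nonincr]]]] :=
  exists_sorted_spectral (herm_part_hermitian (w'^* *: A)).
rewrite (trace_pow_herm_part_sorted P_unitary H_spec s_inj).
rewrite (trace_pow_herm_part_sorted P'_unitary H'_spec s'_inj).
apply: eq_bigr => j _; congr (_ ^+ _).
have ind_lt_real k : real_vec (ind_lt k : 'I_n.+1 -> C) by move=> i; apply: realn.
have [r [r_ge0 disc_r]] := disc_ranges (ind_lt_real j).
have [r' [r'_ge0 disc_r']] := disc_ranges (ind_lt_real j.+1).
have le_jn : (j <= n.+1)%N by apply: ltnW.
have top_w := top_sum_eq_radius w1 P_unitary H_spec s_inj d_s_nonincr.
have top_w' := top_sum_eq_radius w'1 P'_unitary H'_spec s'_inj d'_s'_nonincr.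
rewrite (ind_lt_diff (fun i => d 0 (s i))) (ind_lt_diff (fun i => d' 0 (s' i))).
rewrite (top_w _ _ le_jn r_ge0 disc_r) (top_w' _ _ le_jn r_ge0 disc_r).
by rewrite (top_w _ _ (ltn_ord j) r'_ge0 disc_r') (top_w' _ _ (ltn_ord j) r'_ge0 disc_r').
Qed.

Lemma disc_ranges_nilpotent : A ^+ n.+1 = 0.
Proof.
apply: nilpotent_of_trace_pow => m m_gt0.
pose K := \tr (herm_part (1^* *: A) ^+ m).
apply: (trace_pow_eq0_of_unit_circle (B := A ^t*) (K := K) m_gt0).
move=> w w1; rewrite herm_part_unit_circle // exprZn mxtraceZ.
by rewrite (trace_pow_herm_part_indep m w1 (normr1 C)).
Qed.

End DiscRanges.

Theorem mainTheorem17 (C : numClosedFieldType) (n : nat) (A : 'M[C]_n) :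
  (forall c : 'I_n -> C, real_vec c -> is_closed_disc0 (c_numrange c A)) ->
  mx_nilpotent A.
Proof.
case: n A => [|n] A disc_ranges; first by exists 0%N; apply/matrixP => -[].
by exists n.+1; apply: disc_ranges_nilpotent.
Qed.
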